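(* Let $\Phi\colon\mathcal{M}(2;\mathbb{C})\to\mathcal{M}(2;\mathbb{C})$ be a polynomial automorphism compatible with conjugation. Then the restriction $\Phi_{|\mathcal{D}}$ (identified with a polynomial automorphism of $\mathbb{C}^2$) is an elementary automorphism; in particular $\Phi$ preserves a polynomial fibration $\mathcal{L}\colon\mathcal{M}(2;\mathbb{C})\to\mathbb{C}$ transverse to $\mathcal{D}$, in the sense that $\mathcal{L}_{|\mathcal{D}}\colon\mathcal{D}\to\mathbb{C}$ is nonconstant.
   Context: $\mathcal{M}(2;\mathbb{C})$ is the space of complex $2\times2$ matrices and $\mathcal{D}=\{\mathrm{diag}(\lambda_1,\lambda_2)\}\simeq\mathbb{C}^2$ the diagonal matrices. A rational map $\Phi$ is compatible with conjugation if $\mathrm{A}\Phi(\mathrm{M})\mathrm{A}^{-1}=\Phi(\mathrm{A}\mathrm{M}\mathrm{A}^{-1})$ for all $\mathrm{A}\in\mathrm{GL}(2;\mathbb{C})$ whenever $\mathrm{M}$ and $\mathrm{A}\mathrm{M}\mathrm{A}^{-1}$ lie outside the indeterminacy locus of $\Phi$. Such a $\Phi$ maps $\mathcal{D}$ into $\mathcal{D}$. An elementary automorphism of $\mathbb{C}^2$ is one conjugate in the group of polynomial automorphisms to a map $(x,y)\mapsto(\alpha x+P(y),\beta y+\gamma)$ with $\alpha,\beta\in\mathbb{C}^*$, $\gamma\in\mathbb{C}$, $P\in\mathbb{C}[y]$. $\Phi$ preserves the fibration given by $\mathcal{L}$ if the foliation by level sets of $\mathcal{L}$ is invariant by $\Phi$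 (i.e. $\Phi$ maps level sets of $\mathcal{L}$ into level sets of $\mathcal{L}$). *)

From HB Require Import structures.
From mathcomp Require Import all_boot all_order all_algebra.
From mathcomp Require Import reals.
From mathcomp Require Import complex.
From mathcomp Require Import mpoly.
Set Implicit Arguments. Unset Strict Implicit. Unset Printing Implicit Defensive.
Import Order.TTheory GRing.Theory Num.Theory.
Local Open Scope ring_scope.

Section Defs.
Variable K : fieldType.

(* coordinates of a 2x2 matrix in K^4 : (m11, m12, m21, m22) *)
Definition mx_coords (M : 'M[K]_2) : 'I_4 -> K := fun k => mxvec M 0 k.

Definition pt_coords (z : K * K) : 'I_2 -> K :=
  fun k => if val k == 0%N then z.1 else z.2.

Definition poly_mx_map (F : 'M[K]_2 -> 'M[K]_2) : Prop :=
  exists p : 'I_2 -> 'I_2 -> {mpoly K[4]},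
    forall M i j, F M i j = (p i j).@[mx_coords M].

Definition poly_mx_fun (L : 'M[K]_2 -> K) : Prop :=
  exists p : {mpoly K[4]}, forall M, L M = p.@[mx_coords M].

Definition poly_mx_aut (F : 'M[K]_2 -> 'M[K]_2) : Prop :=
  poly_mx_map F /\
  exists G, poly_mx_map G /\ cancel F G /\ cancel G F.

Definition poly_map2 (f : K * K -> K * K) : Prop :=
  exists p q : {mpoly K[2]},
    forall z, f z = (p.@[pt_coords z], q.@[pt_coords z]).

Definition poly_aut2 (f : K * K -> K * K) : Prop :=
  poly_map2 f /\ exists g, poly_map2 g /\ cancel f g /\ cancel g f.

Definition elementary_aut (f : K * K -> K * K) : Prop :=
  exists (psi psiinv : K * K -> K * K),
    poly_aut2 psi /\ cancel psi psiinv /\ cancel psiinv psi /\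
    exists (a b c : K) (P : {poly K}),
      a != 0 /\ b != 0 /\
      forall z, f z = psiinv ((a * (psi z).1 + P.[(psi z).2],
                                b * (psi z).2 + c)).

(* compatibility with conjugation (Phi polynomial: no indeterminacy) *)
Definition conj_compatible (Phi : 'M[K]_2 -> 'M[K]_2) : Prop :=
  forall A : 'M[K]_2, A \in unitmx ->
    forall M, A *m Phi M *m invmx A = Phi (A *m M *m invmx A).

Definition dmx (z : K * K) : 'M[K]_2 :=
  \matrix_(i, j) if i == j then (if i == ord0 then z.1 else z.2) else 0.

Definition diag_restr (Phi : 'M[K]_2 -> 'M[K]_2) (z : K * K) : K * K :=
  (Phi (dmx z) ord0 ord0, Phi (dmx z) ord_max ord_max).

Definition preserves_fibration (Phi : 'M[K]_2 -> 'M[K]_2) (L : 'M[K]_2 -> K) :=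
  forall M N, L M = L N -> L (Phi M) = L (Phi N).

Definition transverse_to_D (L : 'M[K]_2 -> K) : Prop :=
  exists z w : K * K, L (dmx z) != L (dmx w).

End Defs.

From HB Require Import structures.
From mathcomp Require Import all_boot all_order all_algebra.
From mathcomp Require Import reals complex mpoly ring.
Set Implicit Arguments. Unset Strict Implicit. Unset Printing Implicit Defensive.
Import Order.TTheory GRing.Theory Num.Theory.
Local Open Scope ring_scope.

(* Conjugating by diag(1,-1) and by the transposition matrix shows that
   Phi(diag(x,y)) = diag(f(x,y), f(y,x)) for a polynomial f, and injectivity of
   Phi makes (x,y) |-> (f(x,y), f(y,x)) injective.  In the coordinates s = x+y,
   d = x-y let sigma(s,d) and delta(s,d) be the sum and the difference of the
   two components.  For d <> 0, s |-> delta(s,d) is a polynomial without zeros,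
   hence constant; then s |-> sigma(s,d) is an injective polynomial, hence
   affine, whose slope is a nonvanishing polynomial in d, hence constant; and
   d |-> delta(d) is injective, hence linear.  So in these coordinates Phi|D is
   (s,d) |-> (a s + beta(d), b d).  Matrices with nonzero discriminant
   tr^2 - 4 det are diagonalisable, so on them Phi multiplies this conjugation
   invariant by b^2; by polynomiality it does so everywhere, and Phi preserves
   its level sets. *)

Definition polyfun (K : nzRingType) (g : K -> K) :=
  exists q : {poly K}, forall t, g t = q.[t].

Section PolynomialFunctions.
Variable K : comNzRingType.
Implicit Types g h : K -> K.

Lemma polyfun_eq g h : g =1 h -> polyfun g -> polyfun h.
Proof. by move=> e [q hq]; exists q => t; rewrite -e. Qed.

Lemma polyfun_cst c : polyfun (fun _ : K => c).
Proof. by exists c%:P => t; rewrite hornerC. Qed.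

Lemma polyfun_id : polyfun (fun t : K => t).
Proof. by exists 'X => t; rewrite hornerX. Qed.

Lemma polyfunD g h : polyfun g -> polyfun h -> polyfun (fun t => g t + h t).
Proof. by move=> [p hp] [q hq]; exists (p + q) => t; rewrite hornerD hp hq. Qed.

Lemma polyfunN g : polyfun g -> polyfun (fun t => - g t).
Proof. by move=> [p hp]; exists (- p) => t; rewrite hornerN hp. Qed.

Lemma polyfunB g h : polyfun g -> polyfun h -> polyfun (fun t => g t - h t).
Proof. by move=> hg hh; apply: polyfunD => //; apply: polyfunN. Qed.

Lemma polyfunM g h : polyfun g -> polyfun h -> polyfun (fun t => g t * h t).
Proof. by move=> [p hp] [q hq]; exists (p * q) => t; rewrite hornerM hp hq. Qed.

Lemma polyfunX g n : polyfun g -> polyfun (fun t => g t ^+ n).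
Proof. by move=> [p hp]; exists (p ^+ n) => t; rewrite horner_exp hp. Qed.

Lemma polyfun_sum (I : Type) (s : seq I) (F : I -> K -> K) :
  (forall i, polyfun (F i)) -> polyfun (fun t => \sum_(i <- s) F i t).
Proof.
move=> hF; elim: s => [|i s IH].
  by apply: polyfun_eq (polyfun_cst 0) => t; rewrite big_nil.
by apply: polyfun_eq (polyfunD (hF i) IH) => t; rewrite big_cons.
Qed.

Lemma polyfun_prod (I : Type) (s : seq I) (F : I -> K -> K) :
  (forall i, polyfun (F i)) -> polyfun (fun t => \prod_(i <- s) F i t).
Proof.
move=> hF; elim: s => [|i s IH].
  by apply: polyfun_eq (polyfun_cst 1) => t; rewrite big_nil.
by apply: polyfun_eq (polyfunM (hF i) IH) => t; rewrite big_cons.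
Qed.

Lemma polyfun_meval n (p : {mpoly K[n]}) (v : 'I_n -> K -> K) :
  (forall k, polyfun (v k)) -> polyfun (fun t => p.@[fun k => v k t]).
Proof.
move=> hv; apply: polyfun_eq (fun t => esym (mevalE _ _)) _.
apply: polyfun_sum => m; apply: polyfunM; first exact: polyfun_cst.
by apply: polyfun_prod => i; apply: polyfunX.
Qed.

End PolynomialFunctions.

Arguments polyfun_id {K}.

Lemma poly_horner_eq0 (K : numDomainType) (q : {poly K}) :
  (forall t, q.[t] = 0) -> q = 0.
Proof.
move=> q0; apply/eqP/negPn/negP => qn0.
suff : (size (mkseq (fun i => (i%:R : K)) (size q)) < size q)%N.
  by rewrite size_mkseq ltnn.
apply: max_poly_roots qn0 _ _; first by apply/allP => x _; apply/rootP.
by rewrite map_inj_uniq ?iota_uniq // => i j /eqP; rewrite eqr_nat => /eqP.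
Qed.

Lemma polyfun_eq0_outside_zeros (K : numDomainType) (g h : K -> K) :
  polyfun g -> polyfun h -> ~ (forall t, h t = 0) ->
  (forall t, h t != 0 -> g t = 0) -> forall t, g t = 0.
Proof.
move=> [p hp] [q hq] hn0 gh.
have pq0 : p * q = 0.
  apply: poly_horner_eq0 => t; rewrite hornerM -hp -hq.
  by have [-> | /gh ->] := eqVneq (h t) 0; rewrite ?mulr0 ?mul0r.
have qn0 : q != 0 by apply: contra_notN hn0 => /eqP q0 t; rewrite hq q0 horner0.
move: pq0 => /eqP; rewrite mulf_eq0 (negPf qn0) orbF => /eqP p0 t.
by rewrite hp p0 horner0.
Qed.

Section ClosedField.
Variable K : numClosedFieldType.

Lemma polyfun_nonvanishing_const (g : K -> K) :
  polyfun g -> (forall t, g t != 0) -> forall t, g t = g 0.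
Proof.
move=> [q hq] nz t.
have : size q == 1.
  apply/negPn/negP => /closed_rootP [x /rootP rx].
  by have := nz x; rewrite hq rx eqxx.
by case/size_poly1P => c _ qE; rewrite !hq qE !hornerC.
Qed.

(* For injective q, q - q.[x] has x as its only root, of multiplicity
   deg q >= 2, so it is a root of the derivative. *)
Lemma deriv_horner_inj (q : {poly K}) :
  (3 <= size q)%N -> injective (horner q) -> forall x, q^`().[x] = 0.
Proof.
move=> hs inj x.
have [rs hrs] := closed_field_poly_normal (q - (q.[x])%:P).
have szq : size (q - (q.[x])%:P) = size q.
  rewrite size_polyDl // size_polyN size_polyC.
  by case: (_ != 0) => //; apply: leq_trans hs.
have ln0 : lead_coef (q - (q.[x])%:P) != 0.
  by rewrite lead_coef_eq0 -size_poly_eq0 szq; apply/eqP => h; rewrite h in hs.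
have szrs : size q = (size rs).+1.
  by rewrite -szq {1}hrs size_scale // size_prod_XsubC.
have allx z : z \in rs -> z = x.
  move=> zin; apply: inj.
  have : root (q - (q.[x])%:P) z by rewrite hrs rootZ // root_prod_XsubC.
  by rewrite rootE hornerD hornerN hornerC subr_eq0 => /eqP.
move: hrs szrs; case: rs allx => [|z1 [|z2 rs]] allx hrs szrs;
  rewrite szrs in hs => //.
rewrite (allx z1) ?inE ?eqxx // (allx z2) ?inE ?eqxx ?orbT // in hrs.
have -> : q^`() = (q - (q.[x])%:P)^`() by rewrite derivB derivC subr0.
rewrite hrs !big_cons mulrA derivZ hornerZ derivM derivM derivXsubC.
rewrite !(hornerD, hornerM) !hornerX !hornerN !hornerC subrr.
by rewrite !(mul0r, mulr0, addr0, add0r).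
Qed.

Lemma polyfun_inj_affine (g : K -> K) :
  polyfun g -> injective g -> exists a b, forall t, g t = a * t + b.
Proof.
move=> [q hq] inj.
have injq : injective (horner q) by move=> x y; rewrite -!hq => /inj.
have [hs|hs] := leqP (size q) 2.
  exists q`_1, q`_0 => t; rewrite hq (horner_coef_wide _ hs).
  by rewrite !big_ord_recr big_ord0 /= add0r expr0 expr1 mulr1 addrC mulrC.
have d0 : q^`() = 0 by apply: poly_horner_eq0; apply: deriv_horner_inj.
have : q^`()`_(size q).-2 = 0 by rewrite d0 coef0.
rewrite coef_deriv; case E: (size q) hs => [|[|[|n]]] // _.
move/eqP; rewrite mulrn_eq0 /= => /eqP h.
have : lead_coef q != 0 by rewrite lead_coef_eq0 -size_poly_eq0 E.
by rewrite lead_coefE E h eqxx.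
Qed.

End ClosedField.

Section Matrices2.
Variable K : fieldType.

Definition mx2 (a b c d : K) : 'M[K]_2 :=
  \matrix_(i, j) if i == ord0 then (if j == ord0 then a else b)
                 else (if j == ord0 then c else d).

Lemma ord2_ind (P : 'I_2 -> Prop) : P ord0 -> P ord_max -> forall i, P i.
Proof.
move=> h0 h1 [[|[|//]]] Hi.
  by rewrite (_ : Ordinal Hi = ord0) //; apply: val_inj.
by rewrite (_ : Ordinal Hi = ord_max) //; apply: val_inj.
Qed.

Lemma mx2E (M : 'M[K]_2) :
  M = mx2 (M ord0 ord0) (M ord0 ord_max) (M ord_max ord0) (M ord_max ord_max).
Proof. by apply/matrixP; apply: ord2_ind; apply: ord2_ind; rewrite mxE. Qed.

Lemma mx2_inj a b c d a' b' c' d' :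
  mx2 a b c d = mx2 a' b' c' d' -> [/\ a = a', b = b', c = c' & d = d'].
Proof.
move/matrixP=> e.
by split; [move: (e ord0 ord0) | move: (e ord0 ord_max)
          | move: (e ord_max ord0) | move: (e ord_max ord_max)]; rewrite !mxE.
Qed.

Lemma mulmx2 a b c d a' b' c' d' :
  mx2 a b c d *m mx2 a' b' c' d' =
  mx2 (a * a' + b * c') (a * b' + b * d') (c * a' + d * c') (c * b' + d * d').
Proof.
apply/matrixP; apply: ord2_ind; apply: ord2_ind;
  by rewrite !mxE !big_ord_recr big_ord0 /= !mxE add0r.
Qed.

Lemma dmxE (z : K * K) : dmx z = mx2 z.1 0 0 z.2.
Proof. by apply/matrixP; apply: ord2_ind; apply: ord2_ind; rewrite !mxE. Qed.

Lemma dmx_inj : injective (@dmx K).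
Proof. by move=> [x y] [x' y']; rewrite !dmxE => /mx2_inj [/= -> _ _ ->]. Qed.

Lemma det_mx2 a b c d : \det (mx2 a b c d) = a * d - b * c.
Proof.
rewrite (expand_det_row _ ord0) !big_ord_recr big_ord0 /= /cofactor.
by rewrite !det_mx11 !mxE /= expr0 expr1; ring.
Qed.

Lemma mxtrace_mx2 a b c d : \tr (mx2 a b c d) = a + d.
Proof.
by rewrite /mxtrace !big_ord_recr big_ord0 /= !mxE /= add0r.
Qed.

Definition disc (M : 'M[K]_2) := \tr M ^+ 2 - 4%:R * \det M.

Lemma disc_mx2 a b c d : disc (mx2 a b c d) = (a - d) ^+ 2 + 4%:R * (b * c).
Proof. by rewrite /disc mxtrace_mx2 det_mx2; ring. Qed.

Lemma disc_dmx (z : K * K) : disc (dmx z) = (z.1 - z.2) ^+ 2.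
Proof. by rewrite dmxE disc_mx2 mulr0 mulr0 addr0. Qed.

Lemma mx2_unit (a b c d : K) :
  a * d - b * c != 0 -> mx2 a b c d \in unitmx.
Proof. by rewrite unitmxE det_mx2 unitfE. Qed.

Lemma disc_conj (A N : 'M[K]_2) :
  A \in unitmx -> disc (A *m N *m invmx A) = disc N.
Proof.
move=> uA; rewrite /disc mxtrace_mulC mulmxA mulVmx // mul1mx.
by rewrite !det_mulmx det_inv mulrAC mulrV ?mul1r // -unitmxE.
Qed.

End Matrices2.

Lemma polyfun_poly_mx_map (K : fieldType) (Phi : 'M[K]_2 -> 'M[K]_2)
    (N : K -> 'M[K]_2) i j :
  poly_mx_map Phi -> (forall i j, polyfun (fun t => N t i j)) ->
  polyfun (fun t => Phi (N t) i j).
Proof.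
move=> [p hp] hN; apply: polyfun_eq (fun t => esym (hp _ i j)) _.
apply: polyfun_meval => k; case: (@mxvec_indexP 2 2 k) => i' j'.
by apply: polyfun_eq (hN i' j') => t; rewrite /mx_coords mxvecE.
Qed.

Lemma polyfun_disc (K : fieldType) (N : K -> 'M[K]_2) :
  (forall i j, polyfun (fun t => N t i j)) -> polyfun (fun t => disc (N t)).
Proof.
move=> hN.
have discN t : disc (N t) = (N t ord0 ord0 - N t ord_max ord_max) ^+ 2
                            + 4%:R * (N t ord0 ord_max * N t ord_max ord0).
  by rewrite {1}(mx2E (N t)) disc_mx2.
apply: polyfun_eq (fun t => esym (discN t)) _; apply: polyfunD; first by apply: polyfunX; apply: polyfunB.
by apply: polyfunM; [apply: polyfun_cst | apply: polyfunM].
Qed.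

Lemma poly_mx_fun_disc (K : fieldType) : poly_mx_fun (@disc K).
Proof.
pose X (i j : 'I_2) : {mpoly K[4]} := 'X_(mxvec_index i j).
exists ((X ord0 ord0 - X ord_max ord_max) * (X ord0 ord0 - X ord_max ord_max)
        + 4%:R *: (X ord0 ord_max * X ord_max ord0)) => M.
rewrite {1}(mx2E M) disc_mx2 /X mevalD mevalZ !mevalM mevalB !mevalXU.
by rewrite /mx_coords !mxvecE expr2.
Qed.

Lemma transverse_disc (K : fieldType) : transverse_to_D (@disc K).
Proof.
by exists (1, 0), (0, 0); rewrite !disc_dmx /= subr0 subrr expr1n expr0n oner_neq0.
Qed.

Lemma diagonalize (K : numClosedFieldType) (M : 'M[K]_2) : disc M != 0 ->
  exists A z, A \in unitmx /\ M = A *m dmx z *m invmx A.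
Proof.
move=> hM; suff [A [z [uA e]]] : exists A z, A \in unitmx /\ M *m A = A *m dmx z.
  by exists A, z; rewrite -e mulmxK.
move: hM; rewrite (mx2E M).
move: (M ord0 ord0) (M ord0 ord_max) (M ord_max ord0) (M ord_max ord_max).
move=> a b c d; rewrite disc_mx2 => hM.
have [c0|cn0] := eqVneq c 0.
  have dan0 : d - a != 0.
    apply: contra hM => /eqP da.
    by rewrite c0 !mulr0 addr0 -opprB da oppr0 expr0n.
  exists (mx2 1 b 0 (d - a)), (a, d); split.
    by apply: mx2_unit; rewrite mul1r mulr0 subr0.
  by rewrite dmxE !mulmx2 c0 /=; congr mx2; ring.
(* eigenvalues l1, l2 with eigenvectors (l1 - d, c), (l2 - d, c) *)
pose de := sqrtC ((a - d) ^+ 2 + 4%:R * (b * c)).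
have hde : de ^+ 2 = (a - d) ^+ 2 + 4%:R * (b * c) by rewrite sqrtCK.
have den0 : de != 0 by apply: contra hM => /eqP de0; rewrite -hde de0 expr0n.
pose l1 := (a + d + de) / 2%:R.
pose l2 := (a + d - de) / 2%:R.
have eigen l : l = l1 \/ l = l2 -> a * (l - d) + b * c = (l - d) * l.
  move=> hl; apply/eqP; rewrite -subr_eq0.
  have -> : a * (l - d) + b * c - (l - d) * l =
            - (de ^+ 2 - ((a - d) ^+ 2 + 4%:R * (b * c))) / 4%:R.
    by case: hl => ->; rewrite /l1 /l2; field; rewrite ?pnatr_eq0.
  by rewrite hde subrr oppr0 mul0r.
exists (mx2 (l1 - d) (l2 - d) c c), (l1, l2); split.
  apply: mx2_unit.
  have -> : (l1 - d) * c - (l2 - d) * c = c * de.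
    by rewrite /l1 /l2; field; rewrite ?pnatr_eq0.
  by rewrite mulf_neq0.
rewrite dmxE !mulmx2 /=; congr mx2; rewrite ?eigen; try ring; by [left | right].
Qed.

Lemma conj_compatible_commute (K : fieldType) (Phi : 'M[K]_2 -> 'M[K]_2) A M N :
  conj_compatible Phi -> A \in unitmx -> M *m A = A *m N ->
  Phi M *m A = A *m Phi N.
Proof.
move=> Phi_conj uA e.
have -> : M = A *m N *m invmx A by rewrite -e mulmxK.
by rewrite -Phi_conj // mulmxKV.
Qed.

Lemma sum_diff_inj (K : numFieldType) (a b a' b' : K) :
  a + b = a' + b' -> a - b = a' - b' -> a = a' /\ b = b'.
Proof.
move=> e1 e2.
have ea : a = ((a + b) + (a - b)) / 2%:R by field; rewrite ?pnatr_eq0.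
have eb : b = ((a + b) - (a - b)) / 2%:R by field; rewrite ?pnatr_eq0.
by split; [rewrite ea | rewrite eb]; rewrite e1 e2; field; rewrite ?pnatr_eq0.
Qed.

Section DiagonalRestriction.
Variable K : numClosedFieldType.
Variable Phi : 'M[K]_2 -> 'M[K]_2.
Hypothesis Phi_poly : poly_mx_map Phi.
Hypothesis Phi_inj : injective Phi.
Hypothesis Phi_conj : conj_compatible Phi.

Definition dcoef x y := Phi (dmx (x, y)) ord0 ord0.

Lemma Phi_dmx_offdiag z :
  Phi (dmx z) ord0 ord_max = 0 /\ Phi (dmx z) ord_max ord0 = 0.
Proof.
pose A := mx2 1 0 0 (-1 : K).
have uA : A \in unitmx by apply: mx2_unit; rewrite mulr0 subr0 mulrN1 oppr_eq0 oner_eq0.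
have e : dmx z *m A = A *m dmx z by rewrite dmxE !mulmx2; congr mx2; ring.
have h := conj_compatible_commute Phi_conj uA e.
rewrite (mx2E (Phi (dmx z))) !mulmx2 in h; case/mx2_inj: h => _ e01 e10 _.
move: e01 e10; rewrite !(mul0r, mulr0, add0r, addr0, mul1r, mulr1, mulrN1, mulN1r).
by move=> /eqP; rewrite eqNr => /eqP -> /eqP; rewrite eq_sym eqNr => /eqP ->.
Qed.

Lemma Phi_dmx_swap x y : Phi (dmx (x, y)) ord_max ord_max = dcoef y x.
Proof.
pose A := mx2 0 1 1 (0 : K).
have uA : A \in unitmx by apply: mx2_unit; rewrite mul0r sub0r mulr1 oppr_eq0 oner_eq0.
have e : dmx (x, y) *m A = A *m dmx (y, x) by rewrite !dmxE !mulmx2; congr mx2; ring.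
have h := conj_compatible_commute Phi_conj uA e.
rewrite (mx2E (Phi (dmx (x, y)))) (mx2E (Phi (dmx (y, x)))) !mulmx2 in h.
by case/mx2_inj: h => _ _ + _; rewrite !(mul0r, mulr0, add0r, addr0, mul1r, mulr1).
Qed.

Lemma Phi_dmxE x y : Phi (dmx (x, y)) = mx2 (dcoef x y) 0 0 (dcoef y x).
Proof.
have [e01 e10] := Phi_dmx_offdiag (x, y).
by rewrite {1}(mx2E (Phi _)) e01 e10 Phi_dmx_swap.
Qed.

Lemma dcoef_inj x y x' y' :
  dcoef x y = dcoef x' y' -> dcoef y x = dcoef y' x' -> x = x' /\ y = y'.
Proof.
move=> e1 e2; suff /Phi_inj/dmx_inj [-> ->] : Phi (dmx (x, y)) = Phi (dmx (x', y')).
  by [].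
by rewrite !Phi_dmxE e1 e2.
Qed.

Lemma polyfun_dcoef u v :
  polyfun u -> polyfun v -> polyfun (fun t => dcoef (u t) (v t)).
Proof.
move=> hu hv; apply: polyfun_poly_mx_map Phi_poly _ => i j.
apply: (@polyfun_eq _ (fun t => if i == j then if i == ord0 then u t else v t
                                else 0)) => [t|]; first by rewrite mxE.
by case: (i == j); [case: (i == ord0) | exact: polyfun_cst].
Qed.

Definition dcoef_sd s d := dcoef ((s + d) / 2%:R) ((s - d) / 2%:R).
Definition dsum s d := dcoef_sd s d + dcoef_sd s (- d).
Definition ddiff s d := dcoef_sd s d - dcoef_sd s (- d).
Definition dslope d := dsum 1 d - dsum 0 d.

Lemma dcoefE x y : dcoef x y = dcoef_sd (x + y) (x - y).
Proof. by rewrite /dcoef_sd; congr dcoef; field; rewrite ?pnatr_eq0. Qed.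

Lemma polyfun_dcoef_sd u v :
  polyfun u -> polyfun v -> polyfun (fun t => dcoef_sd (u t) (v t)).
Proof.
have half (w : K -> K) : polyfun w -> polyfun (fun t => w t / 2%:R).
  by move=> hw; exact: polyfunM hw (polyfun_cst 2%:R^-1).
by move=> hu hv; apply: polyfun_dcoef; apply: half; [apply: polyfunD | apply: polyfunB].
Qed.

Lemma polyfun_dsum u v :
  polyfun u -> polyfun v -> polyfun (fun t => dsum (u t) (v t)).
Proof.
by move=> hu hv; apply: polyfunD; apply: polyfun_dcoef_sd => //; apply: polyfunN.
Qed.

Lemma polyfun_ddiff u v :
  polyfun u -> polyfun v -> polyfun (fun t => ddiff (u t) (v t)).
Proof.
by move=> hu hv; apply: polyfunB; apply: polyfun_dcoef_sd => //; apply: polyfunN.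
Qed.

Lemma dsum_ddiff_inj s d s' d' :
  dsum s d = dsum s' d' -> ddiff s d = ddiff s' d' -> s = s' /\ d = d'.
Proof.
move=> /sum_diff_inj /[apply] -[].
rewrite /dcoef_sd !opprK => /dcoef_inj /[apply] -[ex ey].
have half_inj (a b : K) : a / 2%:R = b / 2%:R -> a = b.
  by apply: mulIf; rewrite invr_eq0 pnatr_eq0.
exact: sum_diff_inj (half_inj _ _ ex) (half_inj _ _ ey).
Qed.

Lemma ddiff_neq0 s d : d != 0 -> ddiff s d != 0.
Proof.
apply: contra => /eqP D0.
have sym : dsum s (- d) = dsum s d by rewrite /dsum opprK addrC.
have asym : ddiff s (- d) = ddiff s d.
  by rewrite {1}/ddiff opprK -opprB -/(ddiff s d) D0 oppr0.
by have [_ /eqP] := dsum_ddiff_inj sym asym; rewrite eqNr.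
Qed.

Lemma ddiff_indep s d : ddiff s d = ddiff 0 d.
Proof.
have [->|dn0] := eqVneq d 0; first by rewrite /ddiff oppr0 !subrr.
apply: (polyfun_nonvanishing_const (g := ddiff ^~ d)) => [|t].
  exact: polyfun_ddiff polyfun_id (polyfun_cst d).
exact: ddiff_neq0.
Qed.

Lemma dsum_inj d : injective (dsum ^~ d).
Proof.
move=> s s' e.
by case: (dsum_ddiff_inj e (etrans (ddiff_indep s d) (esym (ddiff_indep s' d)))).
Qed.

Lemma dslope_neq0 d : dslope d != 0.
Proof. by rewrite subr_eq0; apply: contra_neq (oner_neq0 K) => /dsum_inj. Qed.

Lemma dslope_const d : dslope d = dslope 0.
Proof.
apply: polyfun_nonvanishing_const dslope_neq0 d.
by apply: polyfunB; apply: polyfun_dsum polyfun_id; apply: polyfun_cst.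
Qed.

Lemma dsum_affine s d : dsum s d = dslope 0 * s + dsum 0 d.
Proof.
have [a [b hab]] := polyfun_inj_affine (polyfun_dsum polyfun_id (polyfun_cst d))
                                      (@dsum_inj d).
by rewrite -(dslope_const d) /dslope !hab; ring.
Qed.

(* Shift s so that (s, d0) and (0, d1) get the same sum coordinate, which the
   nonzero slope allows; their difference coordinates already agree. *)
Lemma ddiff_inj : injective (ddiff 0).
Proof.
move=> d0 d1 e.
pose s := (dsum 0 d1 - dsum 0 d0) / dslope 0.
have es : dsum s d0 = dsum 0 d1 by rewrite dsum_affine /s; field; apply: dslope_neq0.
by case: (dsum_ddiff_inj es (etrans (ddiff_indep s d0) e)).
Qed.

Lemma ddiff_linear : exists2 b, b != 0 & forall s d, ddiff s d = b * d.
Proof.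
have [b [e he]] := polyfun_inj_affine (polyfun_ddiff (polyfun_cst 0) polyfun_id)
                                      ddiff_inj.
have ddiff00 : ddiff 0 0 = 0 by rewrite /ddiff oppr0 subrr.
have e0 : e = 0 by move: (he 0); rewrite ddiff00 mulr0 add0r.
exists b => [|s d]; last by rewrite ddiff_indep he e0 addr0.
apply: contra_neq (oner_neq0 K) => b0; apply: ddiff_inj.
by rewrite !he b0 !mul0r.
Qed.

Lemma diag_restr_sd x y :
  let f := diag_restr Phi (x, y) in
  f.1 + f.2 = dsum (x + y) (x - y) /\ f.1 - f.2 = ddiff (x + y) (x - y).
Proof.
rewrite /diag_restr Phi_dmx_swap -/(dcoef x y) !dcoefE.
by rewrite (addrC y) -(opprB x y).
Qed.

Lemma diag_restr_sum : exists2 a, a != 0 & exists P : {poly K},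
  forall z, (diag_restr Phi z).1 + (diag_restr Phi z).2
            = a * (z.1 + z.2) + P.[z.1 - z.2].
Proof.
have [P hP] : polyfun (dsum 0) := polyfun_dsum (polyfun_cst 0) polyfun_id.
exists (dslope 0); first exact: dslope_neq0.
by exists P => -[x y]; rewrite (proj1 (diag_restr_sd x y)) dsum_affine hP.
Qed.

Lemma diag_restr_diff : exists2 b, b != 0 &
  forall z, (diag_restr Phi z).1 - (diag_restr Phi z).2 = b * (z.1 - z.2).
Proof.
have [b bn0 hb] := ddiff_linear.
by exists b => // -[x y]; rewrite (proj2 (diag_restr_sd x y)) hb.
Qed.

Lemma disc_Phi_dmx b :
  (forall z, (diag_restr Phi z).1 - (diag_restr Phi z).2 = b * (z.1 - z.2)) ->
  forall z, disc (Phi (dmx z)) = b ^+ 2 * disc (dmx z).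
Proof.
move=> hb [x y]; rewrite Phi_dmxE disc_mx2 disc_dmx -exprMn -hb.
by rewrite /diag_restr Phi_dmx_swap !mulr0 addr0.
Qed.

End DiagonalRestriction.

Lemma elementary_aut_sum_diff (K : numFieldType) (f : K * K -> K * K)
    (a b : K) (P : {poly K}) :
  a != 0 -> b != 0 ->
  (forall z, (f z).1 + (f z).2 = a * (z.1 + z.2) + P.[z.1 - z.2]) ->
  (forall z, (f z).1 - (f z).2 = b * (z.1 - z.2)) ->
  elementary_aut f.
Proof.
move=> an0 bn0 hs hd.
pose psi (z : K * K) := (z.1 + z.2, z.1 - z.2).
pose psiinv (w : K * K) := ((w.1 + w.2) / 2%:R, (w.1 - w.2) / 2%:R).
have psiK : cancel psi psiinv.
  by case=> x y; rewrite /psi /psiinv /=; congr pair; field; rewrite ?pnatr_eq0.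
have psiinvK : cancel psiinv psi.
  by case=> x y; rewrite /psi /psiinv /=; congr pair; field; rewrite ?pnatr_eq0.
have poly_psi : poly_map2 psi.
  exists ('X_ord0 + 'X_ord_max), ('X_ord0 - 'X_ord_max) => z.
  by rewrite mevalD mevalB !mevalXU /pt_coords.
have poly_psiinv : poly_map2 psiinv.
  exists ((2%:R)^-1 *: ('X_ord0 + 'X_ord_max)), ((2%:R)^-1 *: ('X_ord0 - 'X_ord_max)).
  move=> z; rewrite !mevalZ mevalD mevalB !mevalXU /pt_coords /psiinv /=.
  by rewrite !(mulrC (2%:R)^-1).
exists psi, psiinv; split; first by split=> //; exists psiinv.
do 2 split=> //; exists a, b, 0, P; split=> //; split=> // z.
by rewrite -[f z]psiK /psi /= hs hd addr0.
Qed.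

Section DiscriminantInvariance.
Variable K : numClosedFieldType.
Variable Phi : 'M[K]_2 -> 'M[K]_2.
Hypothesis Phi_poly : poly_mx_map Phi.
Hypothesis Phi_conj : conj_compatible Phi.
Variable c : K.
Hypothesis disc_Phi_dmx : forall z, disc (Phi (dmx z)) = c ^+ 2 * disc (dmx z).

Lemma disc_Phi_diagonalizable M : disc M != 0 -> disc (Phi M) = c ^+ 2 * disc M.
Proof.
case/diagonalize => A [z [uA ->]].
by rewrite -Phi_conj // !disc_conj // disc_Phi_dmx.
Qed.

(* Extend from the matrices with nonzero discriminant along the line
   t |-> M + t E_11, on which the discriminant is a nonzero polynomial. *)
Lemma disc_Phi M : disc (Phi M) = c ^+ 2 * disc M.
Proof.
pose N t := M + t *: delta_mx ord0 ord0.
have polyfun_N i j : polyfun (fun t => N t i j).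
  apply: (@polyfun_eq _ (fun t => M i j + t * delta_mx ord0 ord0 i j)).
    by move=> t; rewrite !mxE.
  by apply: polyfunD; [apply: polyfun_cst | apply: polyfunM polyfun_id _; apply: polyfun_cst].
have discN t : disc (N t) = (M ord0 ord0 + t - M ord_max ord_max) ^+ 2
                            + 4%:R * (M ord0 ord_max * M ord_max ord0).
  by rewrite {1}(mx2E (N t)) disc_mx2 !mxE /=; ring.
have : forall t, disc (Phi (N t)) - c ^+ 2 * disc (N t) = 0.
  apply: polyfun_eq0_outside_zeros (polyfun_disc polyfun_N) _ _.
  - apply: polyfunB; first by apply: polyfun_disc => i j; apply: polyfun_poly_mx_map.
    by apply: polyfunM (polyfun_cst _) (polyfun_disc polyfun_N).
  - move=> discN0; have : disc (N 1) + disc (N (-1)) - 2%:R * disc (N 0) = 2%:R.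
      by rewrite !discN; ring.
    by rewrite !discN0 mulr0 subr0 addr0 => /eqP; rewrite eq_sym pnatr_eq0.
  - by move=> t /disc_Phi_diagonalizable ->; rewrite subrr.
by move/(_ 0)/eqP; rewrite subr_eq0 /N scale0r addr0 => /eqP.
Qed.

Lemma preserves_fibration_disc : preserves_fibration Phi (@disc K).
Proof. by move=> M N e; rewrite !disc_Phi e. Qed.

End DiscriminantInvariance.

Theorem theorem2p9 (R : realType) (Phi : 'M[R[i]]_2 -> 'M[R[i]]_2) :
  poly_mx_aut Phi -> conj_compatible Phi ->
  elementary_aut (diag_restr Phi) /\
  exists L : 'M[R[i]]_2 -> R[i],
    poly_mx_fun L /\ transverse_to_D L /\ preserves_fibration Phi L.
Proof.
move=> [Phi_poly [G [_ [PhiK _]]]] Phi_conj.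
have Phi_inj := can_inj PhiK.
have [a an0 [P hsum]] := diag_restr_sum Phi_poly Phi_inj Phi_conj.
have [b bn0 hdiff] := diag_restr_diff Phi_poly Phi_inj Phi_conj.
split; first exact: elementary_aut_sum_diff an0 bn0 hsum hdiff.
exists (@disc _); split; first exact: poly_mx_fun_disc.
split; first exact: transverse_disc.
have disc_dmx_scale := disc_Phi_dmx Phi_conj hdiff.
by move=> M N; apply: (preserves_fibration_disc Phi_poly Phi_conj disc_dmx_scale).
Qed.
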